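(* $$\operatorname{Var}(B)=\frac{N\mu}{(1-q)^2}\cdot\begin{cases}2(N-1)-(1+q)\log N, & \gamma=1,\\[2pt] (1+q)(N^{-1/2}-1)+\log N, & \gamma=2,\\[2pt] \dfrac{2}{2-\gamma}N^{2/\gamma-1}+\dfrac{1+q}{\gamma-1}N^{1/\gamma-1}+\dfrac{q(2-\gamma)+\gamma}{(2-\gamma)(1-\gamma)}, & \gamma\notin\{1,2\}.\end{cases}$$
   Context: Model: fix $\delta>0$, $\nu>0$ and $\alpha>\beta\ge 0$, and put $\lambda=\alpha-\beta>0$. The wild-type population is deterministic, of size $e^{\delta t}$ at time $t\ge0$. Mutants arise at the points of an inhomogeneous Poisson process on $[0,\infty)$ with intensity $\nu e^{\delta t}$. Each mutant arising at time $s$ founds a clone that evolves as a linear birth–death process started from one cell, with per-capita birth rate $\alpha$ and death rate $\beta$. Clones are independent of each other and of the Poisson process. For $N>1$ let $\tau=\log N/\delta$, and let $B$ be the total number of mutant cells alive at time $\tau$. Notation: $q=\beta/\alpha\in[0,1)$, $\gamma=\delta/\lambda$, $\mu=\nu/\alpha$. *)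

From Stdlib Require Import Reals Lra ClassicalEpsilon Factorial.
Open Scope R_scope.

(* Total Riemann integral: the Riemann integral of f on [a,b] when f is
   Riemann integrable there, 0 otherwise (value independent of the proof). *)
Definition Rint (f : R -> R) (a b : R) : R :=
  match excluded_middle_informative (inhabited (Riemann_integrable f a b)) with
  | left H => RiemannInt (epsilon H (fun _ => True))
  | right _ => 0
  end.

(* Total series: the sum of the series when it converges, 0 otherwise. *)
Definition series (u : nat -> R) : R :=
  match excluded_middle_informative (exists l, infinite_sum u l) with
  | left H => proj1_sig (constructive_indefinite_description _ H)
  | right _ => 0
  end.

(* Law of a linear birth-death process (birth rate alpha, death rate beta,
   alpha > beta) started from one cell: P(X_t = n)  (Kendall 1948). *)
Definition bd_p0 (alpha beta t : R) : R :=
  beta * (exp ((alpha - beta) * t) - 1) / (alpha * exp ((alpha - beta) * t) - beta).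
Definition bd_eta (alpha beta t : R) : R :=
  alpha * (exp ((alpha - beta) * t) - 1) / (alpha * exp ((alpha - beta) * t) - beta).
Definition bd_pmf (alpha beta t : R) (n : nat) : R :=
  match n with
  | O => bd_p0 alpha beta t
  | S k => (1 - bd_p0 alpha beta t) * (1 - bd_eta alpha beta t) * bd_eta alpha beta t ^ k
  end.

Fixpoint conv_pow (m : nat -> R) (j : nat) (k : nat) : R :=
  match j with
  | O => match k with O => 1 | S _ => 0 end
  | S j' => sum_f_R0 (fun i => m i * conv_pow m j' (k - i)%nat) k
  end.

(* Model: wild type e^{delta t}; mutants arise at the points of a Poisson
   process of intensity nu e^{delta s} on [0, tau]; a mutant born at s has
   B-contribution X_{tau - s}, an independent birth-death clone.  B is thus
   compound Poisson with intensity measure (on clone sizes n)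
     clone_measure n = int_0^tau nu e^{delta s} P(X_{tau-s} = n) ds,
   total mass Lambda = int_0^tau nu e^{delta s} ds. *)
Definition tau (delta N : R) : R := ln N / delta.

Definition clone_measure (delta nu alpha beta N : R) (n : nat) : R :=
  Rint (fun s => nu * exp (delta * s) * bd_pmf alpha beta (tau delta N - s) n)
       0 (tau delta N).

Definition Lambda (delta nu N : R) : R :=
  Rint (fun s => nu * exp (delta * s)) 0 (tau delta N).

Definition B_pmf (delta nu alpha beta N : R) (k : nat) : R :=
  exp (- Lambda delta nu N) *
  series (fun j => conv_pow (clone_measure delta nu alpha beta N) j k / INR (fact j)).

From Stdlib Require Import Reals Lra Lia Psatz ClassicalEpsilon Factorial.
From Coquelicot Require Import Coquelicot.
Open Scope R_scope.

(* B is compound Poisson: given the Poisson number j of clones, B is a sum of j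
   independent clone sizes with law m / Lambda, where m is the clone measure.
   Convolving and summing against the Poisson weights gives E B = M1 and
   E B^2 = M2 + M1^2, where M1, M2 are the first two moments of m, so
   Var B = M2.  The moments of m are time integrals of the birth-death moments
   E X_t = e^{lam t} and E X_t^2 = e^{lam t} (2 alpha e^{lam t} - alpha - beta) / lam
   (interchanging sum and integral is justified by domination by the geometric tail
   at time tau), so Var B is an integral of e^{(delta - 2 lam) s} and e^{(delta - lam) s}
   over [0, tau]; the three cases are whether one of these exponents vanishes. *)

Lemma is_series_partial_sums (a : nat -> R) (l : R) :
  is_series a l <-> is_lim_seq (sum_f_R0 a) l.
Proof. rewrite is_series_Reals, is_lim_seq_Reals. reflexivity. Qed.

Lemma series_is_series (u : nat -> R) (l : R) : is_series u l -> series u = l.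
Proof.
  intro H. apply is_series_Reals in H. unfold series.
  destruct excluded_middle_informative as [e | n].
  - destruct (constructive_indefinite_description _ e) as [x Hx]; simpl.
    exact (uniqueness_sum _ _ _ Hx H).
  - exfalso. apply n. now exists l.
Qed.

Lemma is_series_ext_eq (a b : nat -> R) (la lb : R) :
  (forall n, a n = b n) -> la = lb -> is_series a la -> is_series b lb.
Proof. intros Hab <-. now apply is_series_ext. Qed.

Lemma is_series_le (u v : nat -> R) (lu lv : R) :
  (forall n, u n <= v n) -> is_series u lu -> is_series v lv -> lu <= lv.
Proof.
  rewrite !is_series_partial_sums. intros H Hu Hv.
  exact (is_lim_seq_le _ _ _ _ (fun n => sum_Rle _ _ n (fun i _ => H i)) Hu Hv).
Qed.

Lemma partial_sum_le_series (a : nat -> R) (l : R) n :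
  (forall k, 0 <= a k) -> is_series a l -> sum_f_R0 a n <= l.
Proof. intros Ha H. apply is_series_Reals in H. exact (sum_incr a n l H Ha). Qed.

Lemma term_le_series (a : nat -> R) (l : R) k :
  (forall n, 0 <= a n) -> is_series a l -> a k <= l.
Proof.
  intros Ha H. eapply Rle_trans; [| exact (partial_sum_le_series a l k Ha H)].
  destruct k; simpl; [lra |]. pose proof (cond_pos_sum a k Ha). lra.
Qed.

Lemma is_series_sum_f_R0 (a : nat -> nat -> R) (U : nat -> R) K :
  (forall k, is_series (fun j => a j k) (U k)) ->
  is_series (fun j => sum_f_R0 (a j) K) (sum_f_R0 U K).
Proof.
  intro H. induction K as [|K IH]; simpl; [apply H |].
  apply (is_series_plus _ _ _ _ IH (H (S K))).
Qed.

Lemma is_series_swap_nonneg (a : nat -> nat -> R) (T : nat -> R) (l : R) :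
  (forall j k, 0 <= a j k) -> (forall j, is_series (a j) (T j)) -> is_series T l ->
  exists U, (forall k, is_series (fun j => a j k) (U k)) /\ is_series U l.
Proof.
  intros Ha HT Hl.
  assert (HU : forall k, is_series (fun j => a j k) (Series (fun j => a j k))).
  { intro k. apply Series_correct, (@ex_series_le R_AbsRing R_CompleteNormedModule _ T).
    - intro j. unfold norm; simpl; unfold abs; simpl. rewrite Rabs_pos_eq by auto.
      apply term_le_series; auto.
    - now exists l. }
  set (U := fun k => Series (fun j => a j k)) in HU.
  assert (HUpos : forall k, 0 <= U k).
  { intro k. apply Rle_trans with (a 0%nat k); auto.
    apply (term_le_series (fun j => a j k)); auto. }
  assert (HUS : forall K, sum_f_R0 U K <= l).
  { intro K. apply (is_series_le (fun j => sum_f_R0 (a j) K) T); auto.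
    - intro j. apply partial_sum_le_series; auto.
    - exact (is_series_sum_f_R0 a U K HU). }
  destruct (ex_finite_lim_seq_incr (sum_f_R0 U) l) as [L HL]; auto.
  { intro n. simpl. pose proof (HUpos (S n)). lra. }
  assert (HTL : forall J, sum_f_R0 T J <= L).
  { intro J. apply (is_series_le (fun k => sum_f_R0 (fun j => a j k) J) U).
    - intro k. apply partial_sum_le_series; auto.
    - exact (is_series_sum_f_R0 (fun k j => a j k) T J HT).
    - now apply is_series_partial_sums. }
  assert (L = l).
  { apply Rle_antisym.
    - exact (is_lim_seq_le _ _ _ _ HUS HL (is_lim_seq_const l)).
    - apply is_series_partial_sums in Hl.
      exact (is_lim_seq_le _ _ _ _ HTL Hl (is_lim_seq_const L)). }
  subst L. exists U. split; auto. now apply is_series_partial_sums.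
Qed.

Lemma series_tail_le (u c : nat -> R) (U C : R) K :
  (forall n, Rabs (u n) <= c n) -> is_series u U -> is_series c C ->
  Rabs (U - sum_f_R0 u K) <= C - sum_f_R0 c K.
Proof.
  intros Huc Hu Hc.
  assert (tail : forall (a : nat -> R) l, is_series a l ->
            is_series (fun k => a (S K + k)%nat) (l - sum_f_R0 a K)).
  { intros a l H. apply is_series_incr_n; [lia |].
    simpl pred. rewrite sum_n_Reals.
    assert (E : l - sum_f_R0 a K + sum_f_R0 a K = l) by ring. now rewrite <- E in H. }
  rewrite <- (is_series_unique _ _ (tail u U Hu)), <- (is_series_unique _ _ (tail c C Hc)).
  assert (Hex : ex_series (fun k => Rabs (u (S K + k)%nat))).
  { apply (@ex_series_le R_AbsRing R_CompleteNormedModule _ (fun k => c (S K + k)%nat)).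
    - intro k. unfold norm; simpl; unfold abs; simpl. now rewrite Rabs_Rabsolu.
    - eexists. exact (tail c C Hc). }
  eapply Rle_trans; [exact (Series_Rabs _ Hex) |].
  apply Series_le; [| eexists; exact (tail c C Hc)].
  intro k. split; [apply Rabs_pos | apply Huc].
Qed.

Lemma ex_RInt_sum_f_R0 (f : nat -> R -> R) a b K :
  (forall n, ex_RInt (f n) a b) ->
  ex_RInt (fun x => sum_f_R0 (fun n => f n x) K) a b /\
  RInt (fun x => sum_f_R0 (fun n => f n x) K) a b = sum_f_R0 (fun n => RInt (f n) a b) K.
Proof.
  intro Hf. induction K as [|K [IHex IHeq]]; simpl; [auto |]. split.
  - exact (ex_RInt_plus _ _ _ _ IHex (Hf (S K))).
  - rewrite <- IHeq. exact (RInt_plus _ _ _ _ IHex (Hf (S K))).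
Qed.

Lemma is_series_RInt (f : nat -> R -> R) (F : R -> R) (c : nat -> R) a b :
  a <= b -> (forall n, ex_RInt (f n) a b) -> ex_RInt F a b ->
  (forall n x, a <= x <= b -> Rabs (f n x) <= c n) -> ex_series c ->
  (forall x, a <= x <= b -> is_series (fun n => f n x) (F x)) ->
  is_series (fun n => RInt (f n) a b) (RInt F a b).
Proof.
  intros hab Hf HF Hfc [C HC] HfF.
  apply is_series_partial_sums.
  set (err := fun K => (b - a) * (C - sum_f_R0 c K)).
  assert (Herr : is_lim_seq err 0).
  { replace (Finite 0) with (Rbar_mult (b - a) (Rbar_minus C C))
      by (simpl; f_equal; ring).
    apply is_lim_seq_scal_l, is_lim_seq_minus'; [apply is_lim_seq_const |].
    now apply is_series_partial_sums. }
  apply (is_lim_seq_le_le (fun K => RInt F a b - err K) _ (fun K => RInt F a b + err K)).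
  - intro K. destruct (ex_RInt_sum_f_R0 f a b K Hf) as [Hex Heq]. rewrite <- Heq.
    assert (Hb : Rabs (RInt (fun x => sum_f_R0 (fun n => f n x) K - F x) a b) <= err K).
    { apply abs_RInt_le_const; auto.
      - exact (ex_RInt_minus _ _ _ _ Hex HF).
      - intros x Hx. rewrite Rabs_minus_sym.
        exact (series_tail_le _ c _ C K (fun n => Hfc n x Hx) (HfF x Hx) HC). }
    pose proof (RInt_minus _ _ _ _ Hex HF) as Hminus.
    unfold minus, plus, opp in Hminus; simpl in Hminus.
    unfold Rminus in Hb at 1. rewrite Hminus in Hb.
    revert Hb. unfold Rabs. destruct Rcase_abs; intro; lra.
  - replace (Finite (RInt F a b)) with (Rbar_minus (RInt F a b) 0) by (simpl; f_equal; ring).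
    apply is_lim_seq_minus'; [apply is_lim_seq_const | exact Herr].
  - replace (Finite (RInt F a b)) with (Rbar_plus (RInt F a b) 0) by (simpl; f_equal; ring).
    apply is_lim_seq_plus'; [apply is_lim_seq_const | exact Herr].
Qed.

Lemma Rint_RInt f a b : ex_RInt f a b -> Rint f a b = RInt f a b.
Proof.
  intro H. unfold Rint. destruct excluded_middle_informative as [e | n].
  - symmetry. apply RInt_Reals.
  - exfalso. apply n. constructor. now apply ex_RInt_Reals_0.
Qed.

Lemma ex_RInt_derivable (f : R -> R) a b :
  a <= b -> (forall x, a <= x <= b -> ex_derive f x) -> ex_RInt f a b.
Proof.
  intros Hab Hf. apply (@ex_RInt_continuous R_CompleteNormedModule). intros z Hz.
  rewrite Rmin_left, Rmax_right in Hz by exact Hab.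
  now apply (@ex_derive_continuous R_AbsRing R_NormedModule), Hf.
Qed.

(** * The linear birth-death process *)

Lemma is_series_geom_mean x :
  0 <= x < 1 -> is_series (fun k => INR (S k) * x ^ k) (/ (1 - x) ^ 2).
Proof.
  intro Hx.
  assert (Hgeom : is_series (fun k => x ^ k) (/ (1 - x))).
  { apply is_series_geom. rewrite Rabs_pos_eq; lra. }
  assert (Hpow : forall n, 0 <= x ^ n) by (intro; apply pow_le; lra).
  refine (is_series_ext_eq _ _ _ _ _ _ (is_series_mult_pos _ _ _ _ Hgeom Hgeom Hpow Hpow)).
  - intro n. rewrite (sum_eq _ (fun _ => x ^ n)), sum_cte; [ring |].
    intros i Hi. rewrite <- pow_add. f_equal. lia.
  - field. lra.
Qed.

Lemma is_series_geom_second_moment x :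
  0 <= x < 1 -> is_series (fun k => INR (S k) ^ 2 * x ^ k) ((1 + x) / (1 - x) ^ 3).
Proof.
  intro Hx.
  assert (Hgeom : is_series (fun k => x ^ k) (/ (1 - x))).
  { apply is_series_geom. rewrite Rabs_pos_eq; lra. }
  assert (Hpow : forall n, 0 <= x ^ n) by (intro; apply pow_le; lra).
  assert (Hmean_pos : forall n, 0 <= INR (S n) * x ^ n).
  { intro. apply Rmult_le_pos; [apply pos_INR | auto]. }
  pose proof (is_series_mult_pos _ _ _ _ (is_series_geom_mean x Hx) Hgeom Hmean_pos Hpow) as Htri.
  assert (Hbin : is_series (fun n => INR (S n) * INR (S (S n)) / 2 * x ^ n)
                   (/ (1 - x) ^ 2 * / (1 - x))).
  { assert (Hgauss : forall n, sum_f_R0 (fun i => INR (S i)) n = INR (S n) * INR (S (S n)) / 2).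
    { induction n as [|n IH]; [simpl; field |]. rewrite tech5, IH, !S_INR. field. }
    refine (is_series_ext_eq _ _ _ _ _ eq_refl Htri). intro n.
    rewrite (sum_eq _ (fun i => INR (S i) * x ^ n)).
    - rewrite <- scal_sum, Hgauss. ring.
    - intros i Hi. rewrite Rmult_assoc, <- pow_add. do 2 f_equal. lia. }
  (* (k+1)^2 = 2 * C(k+2, 2) - (k+1) *)
  pose proof (is_series_minus _ _ _ _ (is_series_scal_l 2 _ _ Hbin) (is_series_geom_mean x Hx))
    as H.
  unfold minus, plus, opp, scal, mult in H; cbn -[INR pow] in H.
  refine (is_series_ext_eq _ _ _ _ _ _ H).
  - intro n. rewrite (S_INR (S n)). field.
  - field. lra.
Qed.

Lemma exp_le_exp x y : x <= y -> exp x <= exp y.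
Proof. intros [Hlt | ->]; [left; now apply exp_increasing | lra]. Qed.

Definition bd_second_moment (alpha beta t : R) : R :=
  exp ((alpha - beta) * t) * (2 * alpha * exp ((alpha - beta) * t) - alpha - beta)
  / (alpha - beta).

Section BirthDeath.

Variables alpha beta : R.
Hypothesis Hbeta : 0 <= beta.
Hypothesis Hab : beta < alpha.

Lemma bd_growth_ge1 t : 0 <= t -> 1 <= exp ((alpha - beta) * t).
Proof. intro Ht. rewrite <- exp_0. apply exp_le_exp. nra. Qed.

Lemma bd_denominator_pos t : 0 <= t -> 0 < alpha * exp ((alpha - beta) * t) - beta.
Proof. intro Ht. pose proof (bd_growth_ge1 t Ht). nra. Qed.

Lemma bd_one_minus_eta t :
  0 <= t -> 1 - bd_eta alpha beta t = (alpha - beta) / (alpha * exp ((alpha - beta) * t) - beta).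
Proof. intro Ht. pose proof (bd_denominator_pos t Ht). unfold bd_eta. field. lra. Qed.

Lemma bd_one_minus_p0 t :
  0 <= t ->
  1 - bd_p0 alpha beta t
  = (alpha - beta) * exp ((alpha - beta) * t) / (alpha * exp ((alpha - beta) * t) - beta).
Proof. intro Ht. pose proof (bd_denominator_pos t Ht). unfold bd_p0. field. lra. Qed.

Lemma bd_eta_range t : 0 <= t -> 0 <= bd_eta alpha beta t < 1.
Proof.
  intro Ht. pose proof (bd_denominator_pos t Ht) as Hden. pose proof (bd_one_minus_eta t Ht).
  assert (0 < (alpha - beta) / (alpha * exp ((alpha - beta) * t) - beta))
    by (apply Rdiv_lt_0_compat; lra).
  split; [| lra]. unfold bd_eta. apply Rdiv_le_0_compat; [| lra].
  pose proof (bd_growth_ge1 t Ht). nra.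
Qed.

Lemma bd_p0_range t : 0 <= t -> 0 <= bd_p0 alpha beta t <= 1.
Proof.
  intro Ht. pose proof (bd_denominator_pos t Ht). pose proof (bd_one_minus_p0 t Ht).
  assert (0 <= (alpha - beta) * exp ((alpha - beta) * t)
               / (alpha * exp ((alpha - beta) * t) - beta)).
  { apply Rdiv_le_0_compat; [| lra]. pose proof (exp_pos ((alpha - beta) * t)). nra. }
  split; [| lra]. unfold bd_p0. apply Rdiv_le_0_compat; [| lra].
  pose proof (bd_growth_ge1 t Ht). nra.
Qed.

Lemma bd_eta_le s t : 0 <= s <= t -> bd_eta alpha beta s <= bd_eta alpha beta t.
Proof.
  intro Hst.
  pose proof (bd_one_minus_eta s ltac:(lra)). pose proof (bd_one_minus_eta t ltac:(lra)).
  pose proof (bd_denominator_pos s ltac:(lra)).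
  assert (exp ((alpha - beta) * s) <= exp ((alpha - beta) * t)) by (apply exp_le_exp; nra).
  assert ((alpha - beta) / (alpha * exp ((alpha - beta) * t) - beta)
          <= (alpha - beta) / (alpha * exp ((alpha - beta) * s) - beta)).
  { apply Rmult_le_compat_l; [lra |]. apply Rinv_le_contravar; nra. }
  lra.
Qed.

Lemma bd_pmf_nonneg t n : 0 <= t -> 0 <= bd_pmf alpha beta t n.
Proof.
  intro Ht. pose proof (bd_eta_range t Ht). pose proof (bd_p0_range t Ht).
  destruct n; simpl; [lra |].
  apply Rmult_le_pos; [apply Rmult_le_pos; lra | apply pow_le; lra].
Qed.

Lemma bd_pmf_le_geom s t k :
  0 <= s <= t -> bd_pmf alpha beta s (S k) <= bd_eta alpha beta t ^ k.
Proof.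
  intro Hst. simpl.
  pose proof (bd_eta_range s ltac:(lra)). pose proof (bd_p0_range s ltac:(lra)).
  pose proof (bd_eta_le s t Hst).
  assert (bd_eta alpha beta s ^ k <= bd_eta alpha beta t ^ k) by (apply pow_incr; lra).
  assert (0 <= bd_eta alpha beta s ^ k) by (apply pow_le; lra).
  assert (0 <= (1 - bd_p0 alpha beta s) * (1 - bd_eta alpha beta s) <= 1).
  { split; [apply Rmult_le_pos; lra |]. rewrite <- (Rmult_1_r 1).
    apply Rmult_le_compat; lra. }
  nra.
Qed.

(* The law of X_t is a zero-modified geometric law. *)
Lemma is_series_weighted_bd_pmf (w : nat -> R) t (l : R) :
  0 <= t -> is_series (fun k => w (S k) * bd_eta alpha beta t ^ k) l ->
  is_series (fun n => w n * bd_pmf alpha beta t n)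
    (w O * bd_p0 alpha beta t
     + (1 - bd_p0 alpha beta t) * (1 - bd_eta alpha beta t) * l).
Proof.
  intros Ht Hl. apply is_series_decr_1.
  refine (is_series_ext_eq _ _ _ _ _ _
    (is_series_scal_l ((1 - bd_p0 alpha beta t) * (1 - bd_eta alpha beta t)) _ _ Hl)).
  - intro n. unfold scal; simpl; unfold mult; simpl. ring.
  - unfold plus, opp, scal; simpl; unfold mult; simpl. ring.
Qed.

Lemma ex_series_weighted_geom (w : nat -> R) t (V : R) :
  0 <= t -> is_series (fun n => w n * bd_pmf alpha beta t n) V ->
  ex_series (fun k => w (S k) * bd_eta alpha beta t ^ k).
Proof.
  intros Ht HV.
  assert (Htail : is_series (fun k => w (S k) * bd_pmf alpha beta t (S k))
                    (V - w O * bd_pmf alpha beta t O)).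
  { apply (is_series_incr_1 (fun n => w n * bd_pmf alpha beta t n)).
    refine (is_series_ext_eq _ _ _ _ (fun _ => eq_refl) _ HV).
    unfold plus; simpl; ring. }
  set (A := (1 - bd_p0 alpha beta t) * (1 - bd_eta alpha beta t)).
  assert (HA : 0 < A).
  { unfold A. rewrite bd_one_minus_eta, bd_one_minus_p0 by exact Ht.
    pose proof (bd_denominator_pos t Ht). pose proof (exp_pos ((alpha - beta) * t)).
    apply Rmult_lt_0_compat; apply Rdiv_lt_0_compat; nra. }
  eexists. refine (is_series_ext_eq _ _ _ _ _ eq_refl (is_series_scal_l (/ A) _ _ Htail)).
  intro n. unfold scal; simpl; unfold mult; simpl. fold A. clearbody A. field. lra.
Qed.

Lemma bd_pmf_mass t : 0 <= t -> is_series (bd_pmf alpha beta t) 1.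
Proof.
  intro Ht. pose proof (bd_eta_range t Ht) as Heta.
  assert (Hgeom : is_series (fun k => 1 * bd_eta alpha beta t ^ k) (/ (1 - bd_eta alpha beta t))).
  { refine (is_series_ext_eq _ _ _ _ _ eq_refl (is_series_geom _ _)); [intro; ring |].
    rewrite Rabs_pos_eq; lra. }
  refine (is_series_ext_eq _ _ _ _ _ _ (is_series_weighted_bd_pmf (fun _ => 1) t _ Ht Hgeom)).
  - intro; ring.
  - field. lra.
Qed.

Lemma bd_pmf_mean t :
  0 <= t -> is_series (fun n => INR n * bd_pmf alpha beta t n) (exp ((alpha - beta) * t)).
Proof.
  intro Ht. pose proof (bd_denominator_pos t Ht). pose proof (bd_eta_range t Ht).
  refine (is_series_ext_eq _ _ _ _ (fun _ => eq_refl) _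
    (is_series_weighted_bd_pmf INR t _ Ht (is_series_geom_mean _ ltac:(eassumption)))).
  rewrite bd_one_minus_p0, bd_one_minus_eta by exact Ht. simpl INR. field. lra.
Qed.

Lemma bd_pmf_second_moment t :
  0 <= t -> is_series (fun n => INR n ^ 2 * bd_pmf alpha beta t n) (bd_second_moment alpha beta t).
Proof.
  intro Ht. pose proof (bd_denominator_pos t Ht). pose proof (bd_eta_range t Ht).
  refine (is_series_ext_eq _ _ _ _ (fun _ => eq_refl) _
    (is_series_weighted_bd_pmf (fun n => INR n ^ 2) t _ Ht
       (is_series_geom_second_moment _ ltac:(eassumption)))).
  assert (Heta : bd_eta alpha beta t
                 = 1 - (alpha - beta) / (alpha * exp ((alpha - beta) * t) - beta))
    by (rewrite <- bd_one_minus_eta by exact Ht; ring).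
  unfold bd_second_moment. rewrite bd_one_minus_p0, Heta by exact Ht. simpl INR. field. lra.
Qed.

End BirthDeath.

(** * Compound Poisson laws *)

Lemma is_series_exp x : is_series (fun j => x ^ j / INR (fact j)) (exp x).
Proof.
  unfold exp. destruct (exist_exp x) as [l Hl]. simpl.
  apply is_series_Reals in Hl. refine (is_series_ext_eq _ _ _ _ _ eq_refl Hl).
  intro j. unfold Rdiv. ring.
Qed.

Lemma is_series_exp_deriv x : is_series (fun j => INR j * x ^ (j - 1) / INR (fact j)) (exp x).
Proof.
  apply is_series_decr_1. refine (is_series_ext_eq _ _ _ _ _ _ (is_series_exp x)).
  - intro j. rewrite fact_simpl, mult_INR, S_INR. replace (S j - 1)%nat with j by lia.
    pose proof (pos_INR j). pose proof (INR_fact_lt_0 j). field. split; lra.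
  - unfold plus, opp; simpl. field.
Qed.

Lemma is_series_exp_deriv2 x :
  is_series (fun j => INR j * (INR j - 1) * x ^ (j - 2) / INR (fact j)) (exp x).
Proof.
  apply is_series_decr_1, is_series_decr_1.
  refine (is_series_ext_eq _ _ _ _ _ _ (is_series_exp x)).
  - intro j. rewrite !fact_simpl, !mult_INR, !S_INR. replace (S (S j) - 2)%nat with j by lia.
    pose proof (pos_INR j). pose proof (INR_fact_lt_0 j). field. repeat split; lra.
  - unfold plus, opp; simpl. field.
Qed.

Section CompoundPoisson.

Variable m : nat -> R.
Hypothesis m_nonneg : forall n, 0 <= m n.
Variables L M1 M2 : R.
Hypothesis m_mass : is_series m L.
Hypothesis m_mean : is_series (fun n => INR n * m n) M1.
Hypothesis m_second : is_series (fun n => INR n ^ 2 * m n) M2.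

Lemma conv_pow_nonneg j k : 0 <= conv_pow m j k.
Proof.
  revert k. induction j as [|j IH]; intro k; simpl; [destruct k; lra |].
  apply cond_pos_sum. intro i. now apply Rmult_le_pos.
Qed.

Lemma is_series_conv_pow_O (w : nat -> R) : is_series (fun k => w k * conv_pow m O k) (w O).
Proof.
  apply is_series_partial_sums, (is_lim_seq_ext (fun _ => w O)); [| apply is_lim_seq_const].
  intro n. induction n as [|n IH]; [simpl; ring | rewrite tech5, <- IH; simpl; ring].
Qed.

Lemma conv_pow_mass j : is_series (conv_pow m j) (L ^ j).
Proof.
  induction j as [|j IH].
  - refine (is_series_ext_eq _ _ _ _ _ _ (is_series_conv_pow_O (fun _ => 1))); intros; ring.
  - exact (is_series_mult_pos _ _ _ _ m_mass IH m_nonneg (conv_pow_nonneg j)).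
Qed.

Let mean_weight_nonneg (u : nat -> R) :
  (forall n, 0 <= u n) -> forall n, 0 <= INR n * u n.
Proof. intros Hu n. apply Rmult_le_pos; [apply pos_INR | apply Hu]. Qed.

Let square_weight_nonneg (u : nat -> R) :
  (forall n, 0 <= u n) -> forall n, 0 <= INR n ^ 2 * u n.
Proof. intros Hu n. apply Rmult_le_pos; [apply pow_le, pos_INR | apply Hu]. Qed.

(* The weight k = i + (k - i) splits across the convolution. *)
Lemma conv_pow_mean j :
  is_series (fun k => INR k * conv_pow m j k) (INR j * L ^ (j - 1) * M1).
Proof.
  induction j as [|j IH].
  - refine (is_series_ext_eq _ _ _ _ (fun _ => eq_refl) _ (is_series_conv_pow_O INR)). simpl; ring.
  - pose proof (is_series_plus _ _ _ _
      (is_series_mult_pos _ _ _ _ m_mean (conv_pow_mass j)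
         (mean_weight_nonneg m m_nonneg) (conv_pow_nonneg j))
      (is_series_mult_pos _ _ _ _ m_mass IH m_nonneg
         (mean_weight_nonneg _ (conv_pow_nonneg j)))) as H.
    refine (is_series_ext_eq _ _ _ _ _ _ H).
    + intro k. simpl conv_pow. unfold plus; simpl. rewrite scal_sum, <- sum_plus.
      apply sum_eq. intros i Hi. rewrite minus_INR by lia. ring.
    + rewrite S_INR. unfold plus; simpl.
      destruct j as [|j]; [simpl; ring |]. rewrite S_INR. simpl. rewrite Nat.sub_0_r. ring.
Qed.

(* Here k^2 = i^2 + 2 i (k - i) + (k - i)^2. *)
Lemma conv_pow_second_moment j :
  is_series (fun k => INR k ^ 2 * conv_pow m j k)
    (INR j * L ^ (j - 1) * M2 + INR j * (INR j - 1) * L ^ (j - 2) * M1 ^ 2).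
Proof.
  induction j as [|j IH].
  - refine (is_series_ext_eq _ _ _ _ (fun _ => eq_refl) _
      (is_series_conv_pow_O (fun k => INR k ^ 2))). simpl; ring.
  - pose proof (is_series_plus _ _ _ _
      (is_series_plus _ _ _ _
        (is_series_mult_pos _ _ _ _ m_second (conv_pow_mass j)
           (square_weight_nonneg m m_nonneg) (conv_pow_nonneg j))
        (is_series_scal_l 2 _ _ (is_series_mult_pos _ _ _ _ m_mean (conv_pow_mean j)
           (mean_weight_nonneg m m_nonneg)
           (mean_weight_nonneg _ (conv_pow_nonneg j)))))
      (is_series_mult_pos _ _ _ _ m_mass IH m_nonneg
         (square_weight_nonneg _ (conv_pow_nonneg j)))) as H.
    refine (is_series_ext_eq _ _ _ _ _ _ H).
    + intro k. simpl conv_pow. unfold plus, scal; simpl; unfold mult; simpl.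
      rewrite (scal_sum _ k 2), (scal_sum _ k (INR k ^ 2)), <- !sum_plus.
      apply sum_eq. intros i Hi. rewrite minus_INR by lia. ring.
    + rewrite S_INR. unfold plus, scal; simpl; unfold mult; simpl.
      destruct j as [|[|j]]; [simpl; ring | simpl; ring |].
      rewrite !S_INR. simpl. rewrite !Nat.sub_0_r. ring.
Qed.

Definition compound_poisson_pmf (k : nat) : R :=
  exp (- L) * series (fun j => conv_pow m j k / INR (fact j)).

(* Fubini over (number of clones j) x (total size k) for the Poisson mixture
   of convolution powers. *)
Lemma is_series_weighted_compound_poisson (w Sw : nat -> R) (l : R) :
  (forall k, 0 <= w k) ->
  (forall j, is_series (fun k => w k * conv_pow m j k) (Sw j)) ->
  is_series (fun j => Sw j / INR (fact j)) l ->
  is_series (fun k => w k * compound_poisson_pmf k) (exp (- L) * l).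
Proof.
  intros Hw HSw Hl.
  assert (Hfact : forall j, 0 < / INR (fact j)) by (intro; apply Rinv_0_lt_compat, INR_fact_lt_0).
  destruct (is_series_swap_nonneg (fun j k => conv_pow m j k / INR (fact j))
              (fun j => L ^ j / INR (fact j)) (exp L)) as [V [HV _]].
  { intros j k. pose proof (conv_pow_nonneg j k). pose proof (Hfact j). unfold Rdiv. nra. }
  { intro j. refine (is_series_ext_eq _ _ _ _ _ eq_refl
      (is_series_scal_r (/ INR (fact j)) _ _ (conv_pow_mass j))); intro; reflexivity. }
  { apply is_series_exp. }
  destruct (is_series_swap_nonneg (fun j k => w k * conv_pow m j k / INR (fact j))
              (fun j => Sw j / INR (fact j)) l) as [U [HU HUl]]; auto.
  { intros j k. pose proof (conv_pow_nonneg j k). pose proof (Hw k). pose proof (Hfact j).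
    unfold Rdiv. apply Rmult_le_pos; [nra | lra]. }
  { intro j. refine (is_series_ext_eq _ _ _ _ _ eq_refl
      (is_series_scal_r (/ INR (fact j)) _ _ (HSw j))); intro; reflexivity. }
  assert (HUV : forall k, U k = w k * V k).
  { intro k. rewrite <- (is_series_unique _ _ (HU k)). apply is_series_unique.
    refine (is_series_ext_eq _ _ _ _ _ eq_refl (is_series_scal_l (w k) _ _ (HV k))).
    intro j. unfold scal; simpl; unfold mult; simpl. unfold Rdiv. ring. }
  refine (is_series_ext_eq _ _ _ _ _ eq_refl (is_series_scal_l (exp (- L)) _ _ HUl)).
  intro k. unfold scal; simpl; unfold mult; simpl. unfold compound_poisson_pmf.
  rewrite (series_is_series _ _ (HV k)), HUV. ring.
Qed.

Lemma compound_poisson_mean :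
  is_series (fun k => INR k * compound_poisson_pmf k) M1.
Proof.
  refine (is_series_ext_eq _ _ _ _ (fun _ => eq_refl) _
    (is_series_weighted_compound_poisson INR _ (M1 * exp L) pos_INR conv_pow_mean _)).
  - rewrite exp_Ropp. field. apply Rgt_not_eq, exp_pos.
  - refine (is_series_ext_eq _ _ _ _ _ eq_refl (is_series_scal_l M1 _ _ (is_series_exp_deriv L))).
    intro j. unfold scal; simpl; unfold mult; simpl. unfold Rdiv. ring.
Qed.

Lemma compound_poisson_second_moment :
  is_series (fun k => INR k ^ 2 * compound_poisson_pmf k) (M2 + M1 ^ 2).
Proof.
  refine (is_series_ext_eq _ _ _ _ (fun _ => eq_refl) _
    (is_series_weighted_compound_poisson (fun k => INR k ^ 2) _ ((M2 + M1 ^ 2) * exp L)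
       (fun k => pow_le _ 2 (pos_INR k)) conv_pow_second_moment _)).
  - rewrite exp_Ropp. field. apply Rgt_not_eq, exp_pos.
  - pose proof (is_series_plus _ _ _ _ (is_series_scal_l M2 _ _ (is_series_exp_deriv L))
      (is_series_scal_l (M1 ^ 2) _ _ (is_series_exp_deriv2 L))) as H.
    refine (is_series_ext_eq _ _ _ _ _ _ H).
    + intro j. unfold plus, scal; simpl; unfold mult; simpl. unfold Rdiv. ring.
    + unfold plus, scal; simpl; unfold mult; simpl. ring.
Qed.

End CompoundPoisson.

(** * The clone measure *)

Definition clone_second_moment (delta nu alpha beta N : R) : R :=
  RInt (fun s => nu * exp (delta * s) * bd_second_moment alpha beta (tau delta N - s))
    0 (tau delta N).

Section CloneMeasure.

Variables delta nu alpha beta N : R.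
Hypothesis Hdelta : 0 <= delta.
Hypothesis Hnu : 0 <= nu.
Hypothesis Hbeta : 0 <= beta.
Hypothesis Hab : beta < alpha.
Hypothesis Htau : 0 <= tau delta N.

Let T := tau delta N.

Let clone_density n s := nu * exp (delta * s) * bd_pmf alpha beta (T - s) n.

Lemma ex_RInt_clone_density n : ex_RInt (clone_density n) 0 T.
Proof.
  apply ex_RInt_derivable; [exact Htau |]. intros x Hx. unfold clone_density.
  pose proof (bd_growth_ge1 alpha beta Hab (T + - x) ltac:(lra)).
  destruct n; unfold bd_pmf, bd_p0, bd_eta; auto_derive; repeat split; nra.
Qed.

Lemma clone_measure_RInt n : clone_measure delta nu alpha beta N n = RInt (clone_density n) 0 T.
Proof. apply Rint_RInt, ex_RInt_clone_density. Qed.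

Lemma clone_measure_nonneg n : 0 <= clone_measure delta nu alpha beta N n.
Proof.
  rewrite clone_measure_RInt. apply RInt_ge_0; [exact Htau | apply ex_RInt_clone_density |].
  intros x Hx. unfold clone_density. pose proof (exp_pos (delta * x)).
  apply Rmult_le_pos; [nra | apply bd_pmf_nonneg; lra].
Qed.

(* Domination: for s in [0, T], e^{delta s} <= e^{delta T} and eta_{T - s} <= eta_T. *)
Lemma is_series_weighted_clone_measure (w : nat -> R) (V : R -> R) :
  (forall n, 0 <= w n) ->
  (forall t, 0 <= t -> is_series (fun n => w n * bd_pmf alpha beta t n) (V t)) ->
  ex_RInt (fun s => nu * exp (delta * s) * V (T - s)) 0 T ->
  is_series (fun n => w n * clone_measure delta nu alpha beta N n)
    (RInt (fun s => nu * exp (delta * s) * V (T - s)) 0 T).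
Proof.
  intros Hw HV HVint.
  set (D := fun n => match n with O => 1 | S k => bd_eta alpha beta T ^ k end).
  assert (HD : ex_series (fun n => nu * exp (delta * T) * (w n * D n))).
  { apply (ex_series_scal_l (V := R_NormedModule)), ex_series_incr_1.
    exact (ex_series_weighted_geom alpha beta Hbeta Hab w T (V T) Htau (HV T Htau)). }
  refine (is_series_ext_eq (fun n => RInt (fun s => w n * clone_density n s) 0 T)
            (fun n => w n * clone_measure delta nu alpha beta N n) _ _ _ eq_refl _).
  { intro n. rewrite clone_measure_RInt.
    exact (RInt_scal (V := R_CompleteNormedModule) _ _ _ _ (ex_RInt_clone_density n)). }
  apply (is_series_RInt _ _ (fun n => nu * exp (delta * T) * (w n * D n)) 0 T Htau); auto.
  - intro n. exact (ex_RInt_scal (V := R_NormedModule) _ _ _ (w n) (ex_RInt_clone_density n)).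
  - intros n x Hx. unfold clone_density.
    assert (Hexp : exp (delta * x) <= exp (delta * T)) by (apply exp_le_exp; nra).
    assert (Hpmf : 0 <= bd_pmf alpha beta (T - x) n <= D n).
    { split; [apply bd_pmf_nonneg; lra |]. destruct n as [|k]; simpl D.
      - simpl. pose proof (bd_p0_range alpha beta Hbeta Hab (T - x)). lra.
      - apply bd_pmf_le_geom; lra. }
    pose proof (Hw n). pose proof (exp_pos (delta * x)).
    rewrite Rabs_pos_eq by (apply Rmult_le_pos; [lra | apply Rmult_le_pos; nra]).
    assert (w n * bd_pmf alpha beta (T - x) n <= w n * D n) by (apply Rmult_le_compat_l; lra).
    replace (w n * (nu * exp (delta * x) * bd_pmf alpha beta (T - x) n))
      with (nu * exp (delta * x) * (w n * bd_pmf alpha beta (T - x) n)) by ring.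
    apply Rmult_le_compat; nra.
  - intros x Hx. refine (is_series_ext_eq _ _ _ _ _ eq_refl
      (is_series_scal_l (nu * exp (delta * x)) _ _ (HV (T - x) ltac:(lra)))).
    intro n. unfold scal; simpl; unfold mult; simpl. unfold clone_density. ring.
Qed.

Lemma ex_RInt_clone_moment (V : R -> R) :
  (forall t, ex_derive V t) -> ex_RInt (fun s => nu * exp (delta * s) * V (T - s)) 0 T.
Proof.
  intro HV. apply ex_RInt_derivable; [exact Htau |]. intros x _.
  apply ex_derive_mult; [auto_derive; exact I |].
  apply (ex_derive_comp V (fun s => T - s)); [apply HV | auto_derive; exact I].
Qed.

Lemma clone_measure_moments :
  is_series (clone_measure delta nu alpha beta N) (Lambda delta nu N)
  /\ is_series (fun n => INR n * clone_measure delta nu alpha beta N n)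
    (RInt (fun s => nu * exp (delta * s) * exp ((alpha - beta) * (T - s))) 0 T)
  /\ is_series (fun n => INR n ^ 2 * clone_measure delta nu alpha beta N n)
    (clone_second_moment delta nu alpha beta N).
Proof.
  split; [| split].
  - refine (is_series_ext_eq _ _ _ _ (fun n => Rmult_1_l _) _
      (is_series_weighted_clone_measure (fun _ => 1) (fun _ => 1) (fun _ => Rle_0_1) _
         (ex_RInt_clone_moment _ _))).
    + unfold Lambda. rewrite Rint_RInt.
      * apply RInt_ext. intros. apply Rmult_1_r.
      * apply ex_RInt_derivable; [exact Htau |]. intros. auto_derive. exact I.
    + intros t Ht. refine (is_series_ext_eq _ _ _ _ (fun n => eq_sym (Rmult_1_l _)) eq_refl _).
      exact (bd_pmf_mass alpha beta Hbeta Hab t Ht).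
    + intro. auto_derive. exact I.
  - exact (is_series_weighted_clone_measure INR (fun t => exp ((alpha - beta) * t))
      pos_INR (bd_pmf_mean alpha beta Hbeta Hab)
      (ex_RInt_clone_moment (fun t => exp ((alpha - beta) * t))
         ltac:(intro; auto_derive; exact I))).
  - exact (is_series_weighted_clone_measure (fun n => INR n ^ 2) (bd_second_moment alpha beta)
      (fun n => pow_le _ 2 (pos_INR n)) (bd_pmf_second_moment alpha beta Hbeta Hab)
      (ex_RInt_clone_moment (bd_second_moment alpha beta)
         ltac:(intro; unfold bd_second_moment; auto_derive; lra))).
Qed.

End CloneMeasure.

(** * The variance in closed form *)

Lemma RInt_exp_linear a T : a <> 0 -> RInt (fun s => exp (a * s)) 0 T = (exp (a * T) - 1) / a.
Proof.
  intro Ha. apply is_RInt_unique.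
  replace ((exp (a * T) - 1) / a) with (minus (exp (a * T) / a) (exp (a * 0) / a))
    by (unfold minus, plus, opp; simpl; rewrite Rmult_0_r, exp_0; field; exact Ha).
  apply (is_RInt_derive (V := R_CompleteNormedModule) (fun s => exp (a * s) / a)).
  - intros x _. auto_derive; [exact I | field; exact Ha].
  - intros x _. apply (@ex_derive_continuous R_AbsRing R_NormedModule). auto_derive. exact I.
Qed.

Lemma RInt_exp_zero T : RInt (fun s => exp (0 * s)) 0 T = T.
Proof.
  rewrite (RInt_ext _ (fun _ => 1)) by (intros; rewrite Rmult_0_l; apply exp_0).
  rewrite RInt_const. unfold scal; simpl; unfold mult; simpl. ring.
Qed.

Lemma clone_second_moment_eq delta nu alpha beta N :
  beta < alpha ->
  clone_second_moment delta nu alpha beta N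
  = nu / (alpha - beta) *
    (2 * alpha * exp (2 * (alpha - beta) * tau delta N)
       * RInt (fun s => exp ((delta - 2 * (alpha - beta)) * s)) 0 (tau delta N)
     - (alpha + beta) * exp ((alpha - beta) * tau delta N)
       * RInt (fun s => exp ((delta - (alpha - beta)) * s)) 0 (tau delta N)).
Proof.
  intro Hab. set (T := tau delta N). set (lam := alpha - beta).
  assert (Hex : forall a, ex_RInt (fun s => exp (a * s)) 0 T).
  { intro a. apply (@ex_RInt_continuous R_CompleteNormedModule). intros z _.
    apply (@ex_derive_continuous R_AbsRing R_NormedModule). auto_derive. exact I. }
  unfold clone_second_moment. fold T. apply is_RInt_unique.
  pose proof (is_RInt_scal (V := R_NormedModule) _ _ _ (nu / lam) _
    (is_RInt_minus (V := R_NormedModule) _ _ _ _ _ _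
      (is_RInt_scal (V := R_NormedModule) _ _ _ (2 * alpha * exp (2 * lam * T)) _
         (RInt_correct _ _ _ (Hex (delta - 2 * lam))))
      (is_RInt_scal (V := R_NormedModule) _ _ _ ((alpha + beta) * exp (lam * T)) _
         (RInt_correct _ _ _ (Hex (delta - lam)))))) as H.
  unfold scal, minus, plus, opp in H; simpl in H; unfold mult in H; simpl in H.
  refine (is_RInt_ext _ _ _ _ _ _ H). intros x _.
  unfold bd_second_moment. fold lam.
  replace ((delta - 2 * lam) * x) with (delta * x + - (2 * lam * x)) by ring.
  replace ((delta - lam) * x) with (delta * x + - (lam * x)) by ring.
  replace (2 * lam * T) with (lam * T + lam * T) by ring.
  replace (lam * (T - x)) with (lam * T + - (lam * x)) by ring.
  replace (2 * lam * x) with (lam * x + lam * x) by ring.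
  rewrite !exp_plus, !exp_Ropp, exp_plus.
  match goal with |- ?a = ?b => change (@eq R a b) end.
  field. split; [apply Rgt_not_eq, exp_pos | unfold lam; lra].
Qed.

Section ClosedForm.

Variables delta nu alpha beta N : R.
Hypothesis Hdelta : 0 < delta.
Hypothesis Hbeta : 0 <= beta.
Hypothesis Hab : beta < alpha.
Hypothesis HN : 1 < N.

Let T := tau delta N.
Let lam := alpha - beta.

Let ln_N : ln N = delta * T.
Proof. unfold T, tau. field. lra. Qed.

Let exp_delta_T : exp (delta * T) = N.
Proof. rewrite <- ln_N. apply exp_ln. lra. Qed.

Let exp_double x y : exp (2 * x * y) = exp (x * y) ^ 2.
Proof. replace (2 * x * y) with (x * y + x * y) by ring. rewrite exp_plus. ring. Qed.

Let delta_eq_gamma_lam : delta = delta / lam * lam.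
Proof. unfold lam. field. lra. Qed.

Lemma clone_second_moment_gamma_one :
  delta / (alpha - beta) = 1 ->
  clone_second_moment delta nu alpha beta N
  = N * (nu / alpha) / (1 - beta / alpha) ^ 2 * (2 * (N - 1) - (1 + beta / alpha) * ln N).
Proof.
  intro G. fold lam in G |- *. rewrite G, Rmult_1_l in delta_eq_gamma_lam.
  rewrite clone_second_moment_eq by exact Hab. fold lam T. clearbody T.
  rewrite <- delta_eq_gamma_lam, exp_double.
  replace (delta - 2 * delta) with (- delta) by ring. rewrite Rminus_diag.
  rewrite RInt_exp_zero, RInt_exp_linear by lra.
  rewrite <- Ropp_mult_distr_l, exp_Ropp, exp_delta_T, ln_N, delta_eq_gamma_lam.
  unfold lam in *. field. repeat split; lra.
Qed.

Lemma clone_second_moment_gamma_two :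
  delta / (alpha - beta) = 2 ->
  clone_second_moment delta nu alpha beta N
  = N * (nu / alpha) / (1 - beta / alpha) ^ 2
    * ((1 + beta / alpha) * (Rpower N (-1 / 2) - 1) + ln N).
Proof.
  intro G. fold lam in G |- *. rewrite G in delta_eq_gamma_lam.
  rewrite clone_second_moment_eq by exact Hab. fold lam T. clearbody T.
  replace (delta - 2 * lam) with 0 by lra. replace (delta - lam) with lam by lra.
  rewrite RInt_exp_zero, RInt_exp_linear by (unfold lam; lra).
  assert (HX : exp (lam * T) ^ 2 = N)
    by (rewrite <- exp_double, <- delta_eq_gamma_lam; exact exp_delta_T).
  assert (HR : Rpower N (-1 / 2) = / exp (lam * T)).
  { unfold Rpower. rewrite ln_N, delta_eq_gamma_lam, <- exp_Ropp. f_equal. field. }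
  rewrite exp_double, HR, ln_N, delta_eq_gamma_lam, <- HX.
  pose proof (exp_pos (lam * T)). unfold lam in *. field. repeat split; lra.
Qed.

Lemma clone_second_moment_gamma_generic :
  delta / (alpha - beta) <> 1 -> delta / (alpha - beta) <> 2 ->
  clone_second_moment delta nu alpha beta N
  = N * (nu / alpha) / (1 - beta / alpha) ^ 2
    * (2 / (2 - delta / (alpha - beta)) * Rpower N (2 / (delta / (alpha - beta)) - 1)
       + (1 + beta / alpha) / (delta / (alpha - beta) - 1)
         * Rpower N (1 / (delta / (alpha - beta)) - 1)
       + (beta / alpha * (2 - delta / (alpha - beta)) + delta / (alpha - beta))
         / ((2 - delta / (alpha - beta)) * (1 - delta / (alpha - beta)))).
Proof.
  fold lam. set (g := delta / lam) in delta_eq_gamma_lam |- *. intros G1 G2.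
  assert (Hg : 0 < g) by (unfold g, lam; apply Rdiv_lt_0_compat; lra).
  rewrite clone_second_moment_eq by exact Hab. fold lam T. clearbody T.
  rewrite !RInt_exp_linear by (rewrite delta_eq_gamma_lam; intro E; nra).
  assert (Hpow : forall c, Rpower N (c / g - 1) = exp (c * lam * T) / N).
  { intro c. unfold Rpower, Rdiv. rewrite ln_N, <- exp_delta_T, <- exp_Ropp, <- exp_plus.
    f_equal. rewrite delta_eq_gamma_lam. field. lra. }
  rewrite (Hpow 2), (Hpow 1), Rmult_1_l, exp_double.
  replace ((delta - 2 * lam) * T) with (delta * T + - (2 * lam * T)) by ring.
  replace ((delta - lam) * T) with (delta * T + - (lam * T)) by ring.
  rewrite !exp_plus, !exp_Ropp, exp_double, exp_delta_T.
  pose proof (exp_pos (lam * T)). rewrite delta_eq_gamma_lam. unfold lam in *.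
  field. repeat split; try lra; intro E; [apply G1 | apply G2];
    apply (Rmult_eq_reg_r (alpha - beta)); lra.
Qed.

End ClosedForm.

Theorem mainTheorem3 (delta nu alpha beta N : R)
  (Hdelta : 0 < delta) (Hnu : 0 < nu) (Hbeta : 0 <= beta) (Hab : beta < alpha)
  (HN : 1 < N) :
  let q := beta / alpha in
  let gamma := delta / (alpha - beta) in
  let mu := nu / alpha in
  let C := N * mu / (1 - q) ^ 2 in
  exists m1 m2 : R,
    infinite_sum (fun k => INR k * B_pmf delta nu alpha beta N k) m1 /\
    infinite_sum (fun k => INR k ^ 2 * B_pmf delta nu alpha beta N k) m2 /\
    (gamma = 1 ->
       m2 - m1 ^ 2 = C * (2 * (N - 1) - (1 + q) * ln N)) /\
    (gamma = 2 ->
       m2 - m1 ^ 2 = C * ((1 + q) * (Rpower N (-1/2) - 1) + ln N)) /\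
    (gamma <> 1 -> gamma <> 2 ->
       m2 - m1 ^ 2 =
         C * (2 / (2 - gamma) * Rpower N (2 / gamma - 1)
              + (1 + q) / (gamma - 1) * Rpower N (1 / gamma - 1)
              + (q * (2 - gamma) + gamma) / ((2 - gamma) * (1 - gamma)))).
Proof.
  intros q gamma mu C.
  assert (Htau : 0 <= tau delta N).
  { unfold tau. apply Rdiv_le_0_compat; [rewrite <- ln_1; apply ln_le |]; lra. }
  pose proof (clone_measure_nonneg delta nu alpha beta N ltac:(lra) Hbeta Hab Htau) as Hm.
  destruct (clone_measure_moments delta nu alpha beta N ltac:(lra) ltac:(lra) Hbeta Hab Htau)
    as [Hmass [Hmean Hsecond]].
  eexists. eexists. split; [| split].
  - apply is_series_Reals. exact (compound_poisson_mean _ Hm _ _ Hmass Hmean).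
  - apply is_series_Reals.
    exact (compound_poisson_second_moment _ Hm _ _ _ Hmass Hmean Hsecond).
  - rewrite Rplus_minus_r. split; [| split].
    + exact (clone_second_moment_gamma_one delta nu alpha beta N Hdelta Hbeta Hab HN).
    + exact (clone_second_moment_gamma_two delta nu alpha beta N Hdelta Hbeta Hab HN).
    + exact (clone_second_moment_gamma_generic delta nu alpha beta N Hdelta Hbeta Hab HN).
Qed.
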